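(* Let $L$ be a finitely additive expectation on a linear space $\mathcal{L}=\{X_i:i\in I\}$ of real-valued functions on $\Omega$ containing all constants. Then the collection of marginal previsions $P(X_i)=L(X_i)$, $i\in I$, is coherent$_1$.
   Context: Random variables are real-valued functions on a nonempty set $\Omega$. A finitely additive expectation on a linear space $\mathcal{L}$ containing all constants is a map $L:\mathcal{L}\to\mathbb{R}\cup\{\pm\infty\}$ that is nonnegative ($X\le Y$ implies $L(X)\le L(Y)$), extended-linear ($L(\alpha X+\beta Y)=\alpha L(X)+\beta L(Y)$ for all real $\alpha,\beta$ whenever the right side is not of the form $\infty-\infty$, with $0\times(\pm\infty)=0$), and satisfies $L(1)=1$. Coherence$_1$ (marginal case): $\{P(X_i):i\in I\}$ is coherent$_1$ if for every finite $\{i_1,\dots,i_n\}\subseteq I$, all real $\alpha_1,\dots,\alpha_n$ with $\alpha_j\ge0$ whenever $P(X_{i_j})=+\infty$ and $\alpha_j\le0$ whenever $P(X_{i_j})=-\infty$, and all real $c_1,\dots,c_n$ with $c_j=P(X_{i_j})$ whenever it is finite, $\sup_\omega\sum_{j=1}^n\alpha_j[X_{i_j}(\omega)-c_j]\ge0$. *)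

From HB Require Import structures.
From mathcomp Require Import all_boot all_order all_algebra.
From mathcomp Require Import all_classical all_reals.
From mathcomp Require Import ereal.
Set Implicit Arguments. Unset Strict Implicit. Unset Printing Implicit Defensive.
Import Order.TTheory GRing.Theory Num.Theory.
Local Open Scope classical_set_scope.
Local Open Scope ring_scope.
Local Open Scope ereal_scope.

Definition linear_space_with_constants (R : realType) (Omega : Type)
  (Lsp : set (Omega -> R)) : Prop :=
  (forall c : R, Lsp (fun _ => c)) /\
  (forall (X Y : Omega -> R) (a b : R), Lsp X -> Lsp Y ->
      Lsp (fun w => (a * X w + b * Y w)%R)).

(* Finitely additive expectation on Lsp (0 * (+-oo) = 0 holds in \bar R). *)
Definition fa_expectation (R : realType) (Omega : Type)
  (Lsp : set (Omega -> R)) (L : (Omega -> R) -> \bar R) : Prop :=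
  (forall X Y, Lsp X -> Lsp Y -> (forall w, (X w <= Y w)%R) -> L X <= L Y) /\
  (forall X Y (a b : R), Lsp X -> Lsp Y ->
     ~ ((a%:E * L X = +oo /\ b%:E * L Y = -oo) \/
        (a%:E * L X = -oo /\ b%:E * L Y = +oo)) ->
     L (fun w => (a * X w + b * Y w)%R) = a%:E * L X + b%:E * L Y) /\
  L (fun _ => 1%R) = 1.

Definition coherent1 (R : realType) (Omega : Type) (I : Type)
  (X : I -> Omega -> R) (P : I -> \bar R) : Prop :=
  forall (n : nat) (idx : 'I_n -> I) (alpha c : 'I_n -> R),
    injective idx ->
    (forall j, P (idx j) = +oo -> (0 <= alpha j)%R) ->
    (forall j, P (idx j) = -oo -> (alpha j <= 0)%R) ->
    (forall j, P (idx j) \is a fin_num -> P (idx j) = (c j)%:E) ->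
    0 <= ereal_sup [set (\sum_(j < n) alpha j * (X (idx j) w - c j))%R%:E
                    | w in [set: Omega]].

From HB Require Import structures.
From mathcomp Require Import all_boot all_order all_algebra.
From mathcomp Require Import all_classical all_reals.
From mathcomp Require Import ereal.
Set Implicit Arguments. Unset Strict Implicit. Unset Printing Implicit Defensive.
Import Order.TTheory GRing.Theory Num.Theory.
Local Open Scope classical_set_scope.
Local Open Scope ring_scope.
Local Open Scope ereal_scope.

(* Every gamble [sum_j alpha_j (X_j - c_j)] lies in the space and, under the
   sign conditions of coherence, each summand has nonnegative expectation, so
   the whole gamble has nonnegative expectation.  An expectation never exceeds
   the supremum of its argument, hence that supremum is nonnegative. *)

Section LinearSpace.
Variables (R : realType) (Omega : Type) (Lsp : set (Omega -> R)).
Hypothesis hLsp : linear_space_with_constants Lsp.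

Lemma linear_space_cst (c : R) : Lsp (fun _ => c).
Proof. exact: hLsp.1. Qed.

Lemma linear_space_add (X Y : Omega -> R) :
  Lsp X -> Lsp Y -> Lsp (fun w => X w + Y w)%R.
Proof.
move=> hX hY; have := hLsp.2 X Y 1%R 1%R hX hY.
by congr Lsp; apply: funext => w; rewrite !mul1r.
Qed.

Lemma linear_space_affine (X : Omega -> R) (a b : R) :
  Lsp X -> Lsp (fun w => a * X w + b)%R.
Proof.
move=> hX; have := hLsp.2 X _ a b hX (linear_space_cst 1%R).
by congr Lsp; apply: funext => w; rewrite mulr1.
Qed.

Lemma linear_space_sum (I : Type) (r : seq I) (f : I -> Omega -> R) :
  (forall j, Lsp (f j)) -> Lsp (fun w => \sum_(j <- r) f j w)%R.
Proof.
move=> hf; elim: r => [|j r IHr].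
  by under eq_fun do rewrite big_nil; exact: linear_space_cst.
by under eq_fun do rewrite big_cons; exact: linear_space_add.
Qed.

End LinearSpace.

Section Expectation.
Variables (R : realType) (Omega : Type) (Lsp : set (Omega -> R))
  (L : (Omega -> R) -> \bar R).
Hypothesis hLsp : linear_space_with_constants Lsp.
Hypothesis hL : fa_expectation Lsp L.

Lemma fa_expectation_affine (X : Omega -> R) (a b : R) : Lsp X ->
  L (fun w => a * X w + b)%R = a%:E * L X + b%:E.
Proof.
have [_ [hlin h1]] := hL; move=> hX.
have -> : (fun w => a * X w + b)%R = (fun w => a * X w + b * (fun=> 1%R) w)%R.
  by apply: funext => w; rewrite mulr1.
rewrite hlin ?h1 ?mule1 //; first exact: linear_space_cst.
by case=> -[].
Qed.

Lemma fa_expectation_cst (c : R) : L (fun _ => c) = c%:E.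
Proof.
have := fa_expectation_affine 0%R c (linear_space_cst hLsp 0%R).
by under eq_fun do rewrite mul0r add0r; rewrite mul0e add0e.
Qed.

Lemma fa_expectation_add_ge0 (X Y : Omega -> R) : Lsp X -> Lsp Y ->
  0 <= L X -> 0 <= L Y -> 0 <= L (fun w => X w + Y w)%R.
Proof.
move=> hX hY hLX hLY; have := hL.2.1 X Y 1%R 1%R hX hY.
under eq_fun do rewrite !mul1r; rewrite !mul1e => ->; first exact: adde_ge0.
by case=> -[hx hy]; [move: hLY | move: hLX]; rewrite ?hx ?hy.
Qed.

Lemma fa_expectation_sum_ge0 (I : Type) (r : seq I) (f : I -> Omega -> R) :
  (forall j, Lsp (f j)) -> (forall j, 0 <= L (f j)) ->
  0 <= L (fun w => \sum_(j <- r) f j w)%R.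
Proof.
move=> hf hLf; elim: r => [|j r IHr].
  by under eq_fun do rewrite big_nil; rewrite fa_expectation_cst.
under eq_fun do rewrite big_cons.
by apply: fa_expectation_add_ge0 => //; exact: linear_space_sum.
Qed.

(* The sign conditions on [a] are exactly what keeps [a * L X - a * c]
   nonnegative when [L X] is infinite. *)
Lemma fa_expectation_centered_ge0 (X : Omega -> R) (a c : R) : Lsp X ->
  (L X = +oo -> (0 <= a)%R) -> (L X = -oo -> (a <= 0)%R) ->
  (L X \is a fin_num -> L X = c%:E) ->
  0 <= L (fun w => a * (X w - c))%R.
Proof.
move=> hX hp hn hc.
under eq_fun do rewrite mulrBr.
rewrite fa_expectation_affine //.
case hLX: (L X) hp hn hc => [r| |] hp hn hc.
- by have [->] := hc isT; rewrite -EFinM -EFinD subrr.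
- have /predU1P[<-|a_gt0] : ((0 == a) || (0 < a))%R by rewrite -le_eqVlt hp.
    by rewrite mul0e mul0r oppr0 adde0.
  by rewrite mulry gtr0_sg // mul1e leey.
- have /predU1P[->|a_lt0] : ((a == 0) || (a < 0))%R by rewrite -le_eqVlt hn.
    by rewrite mul0e mul0r oppr0 adde0.
  by rewrite mulrNy ltr0_sg // mulN1e leey.
Qed.

Lemma fa_expectation_le_sup (Z : Omega -> R) : inhabited Omega -> Lsp Z ->
  L Z <= ereal_sup [set (Z w)%:E | w in [set: Omega]].
Proof.
case=> w0 hZ; set S := ereal_sup _.
have Z_le_S w : (Z w)%:E <= S by apply: ereal_sup_ubound; exists w.
case hS: S Z_le_S => [s| |] Z_le_S; last 2 first.
- exact: leey.
- by have := Z_le_S w0; rewrite leeNy_eq.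
rewrite -(fa_expectation_cst s); apply: hL.1 _ _ hZ (linear_space_cst hLsp s) _ => w.
by rewrite -lee_fin.
Qed.

End Expectation.

Theorem lemma5p2 (R : realType) (Omega : Type) (hOmega : inhabited Omega)
  (Lsp : set (Omega -> R)) (L : (Omega -> R) -> \bar R)
  (hLsp : linear_space_with_constants Lsp)
  (hL : fa_expectation Lsp L) :
  coherent1 (fun i : {X : Omega -> R | Lsp X} => proj1_sig i)
            (fun i => L (proj1_sig i)).
Proof.
move=> n idx alpha c _ hp hn hc.
have hf j : Lsp (fun w => alpha j * (proj1_sig (idx j) w - c j))%R.
  under eq_fun do rewrite mulrBr.
  exact: linear_space_affine hLsp _ _ _ (proj2_sig _).
have sum_ge0 :
    0 <= L (fun w => \sum_(j < n) alpha j * (proj1_sig (idx j) w - c j))%R.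
  apply: (fa_expectation_sum_ge0 hLsp hL) => // j.
  exact: (fa_expectation_centered_ge0 hLsp hL) (proj2_sig _) (hp j) (hn j) (hc j).
apply: le_trans sum_ge0 _.
exact: (fa_expectation_le_sup hLsp hL hOmega) (linear_space_sum hLsp _ hf).
Qed.
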